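(* Let $(\mathsf{E},\mathcal{F},\mu)$ be a probability space, let $P_{1},P_{2}$ be $\mu$-invariant Markov kernels, and for each $i\in\{1,2\}$ let $T_{i}$ be either $P_{i}$ or $P_{i}^{*}P_{i}$. Let $\beta_{1},\beta_{2}:(0,\infty)\to(0,\infty)$ be decreasing with $\beta_{i}(s)\downarrow0$ as $s\to\infty$, and let $\Phi_{1},\Phi_{2}:\mathrm{L}^{2}(\mu)\to[0,\infty]$ be such that for $i=1,2$, all $f\in\mathrm{L}^{2}(\mu)$, $c>0$, $n\in\mathbb{N}$: $\Phi_{i}(cf)=c^{2}\Phi_{i}(f)$, $\Phi_{i}(P_{i}^{n}f)\le\Phi_{i}(f)$, $\|f-\mu(f)\|_{2}^{2}\le a_{i}\Phi_{i}(f-\mu(f))$ with $a_{i}:=\sup_{g\in\mathrm{L}_{0}^{2}(\mu)\setminus\{0\}}\|g\|_{2}^{2}/\Phi_{i}(g)$; assume also $\Phi_{1}(P_{2}^{n}f)\le\Phi_{1}(f)$ for all $n\in\mathbb{N}$, $f\in\mathrm{L}_{0}^{2}(\mu)$. Assume that for all $s>0$ and $f\in\mathrm{L}_{0}^{2}(\mu)$, \[ \|f\|_{2}^{2}\le s\,\mathcal{E}(T_{1},f)+\beta_{1}(s)\Phi_{1}(f),\qquad\mathcal{E}(T_{1},f)\le s\,\mathcal{E}(T_{2},f)+\beta_{2}(s)\Phi_{2}(f). \] Set $\Phi:=\Phi_{1}\vee\Phi_{2}$ and $\beta(s):=\inf\{s_{1}\beta_{2}(s_{2})+\beta_{1}(s_{1}):s_{1}>0,s_{2}>0,s_{1}s_{2}=s\}$.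 Then for all $s>0$ and $f\in\mathrm{L}_{0}^{2}(\mu)$, \[ \|f\|_{2}^{2}\le s\,\mathcal{E}(T_{2},f)+\beta(s)\Phi(f); \] moreover $\beta:(0,\infty)\to(0,\infty)$ is decreasing with $\beta(s)\downarrow0$ as $s\to\infty$, $\Phi(cf)=c^{2}\Phi(f)$ for $c>0$, and $\Phi(P_{2}^{n}f)\le\Phi(f)$ for all $n\in\mathbb{N}$, $f\in\mathrm{L}_{0}^{2}(\mu)$. Finally, writing $K_{i}(u):=u\beta_{i}(1/u)$, $K(u):=u\beta(1/u)$ for $u>0$ and $K^{*},K_{i}^{*}$ for the convex conjugates $K^{*}(v)=\sup_{u\ge0}\{uv-K(u)\}$ (with $K(0)=K_{i}(0)=0$), one has \[ K(u)=\inf\{K_{2}(u_{2})+u_{2}K_{1}(u_{1}):u_{1}>0,u_{2}>0,u_{1}u_{2}=u\},\qquad K^{*}=K_{2}^{*}\circ K_{1}^{*}. \]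
   Context: $\mathrm{L}^{2}(\mu)$ has inner product $\langle f,g\rangle=\int fg\,\mathrm{d}\mu$, norm $\|\cdot\|_{2}$; $\mathrm{L}_{0}^{2}(\mu)$ is the mean-zero subspace; $P^{*}$ is the $\mathrm{L}^{2}(\mu)$-adjoint of $P$; $\mathcal{E}(T,f):=\langle(\mathrm{Id}-T)f,f\rangle$. *)

From HB Require Import structures.
From mathcomp Require Import all_boot all_order all_algebra.
From mathcomp Require Import all_classical all_reals all_analysis.

Set Implicit Arguments.
Unset Strict Implicit.
Unset Printing Implicit Defensive.
Import Order.TTheory GRing.Theory Num.Theory.
Import numFieldNormedType.Exports.
Local Open Scope classical_set_scope.
Local Open Scope ring_scope.

Section L2defs.
Context {d : measure_display} {E : measurableType d} {R : realType}.
Variable mu : {measure set E -> \bar R}.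

(* f is (a representative of an element of) L^2(mu) *)
Definition L2 (f : E -> R) : Prop :=
  measurable_fun setT f /\ mu.-integrable setT (fun x => ((f x) ^+ 2)%:E).

Definition mean (f : E -> R) : R := Rintegral mu setT f.

Definition L20 (f : E -> R) : Prop := L2 f /\ mean f = 0.

Definition ip (f g : E -> R) : R := Rintegral mu setT (fun x => f x * g x).

Definition norm2sq (f : E -> R) : R := ip f f.

Definition dirichlet (T : (E -> R) -> (E -> R)) (f : E -> R) : R :=
  ip (fun x => f x - T f x) f.

(* a_Phi := sup_{g in L^2_0 \ {0}} ||g||^2 / Phi(g)  (in [0,+oo], with
   c/0 = +oo and c/+oo = 0, the conventions of [inve]) *)
Definition aconst (Phi : (E -> R) -> \bar R) : \bar R :=
  ereal_sup [set ((norm2sq g)%:E * (Phi g)^-1)%E | g in [set g | L20 g /\ norm2sq g != 0]].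
End L2defs.

Definition kop {d : measure_display} {E : measurableType d} {R : realType}
  (P : R.-pker E ~> E) (f : E -> R) : E -> R :=
  fun x => Rintegral (P x) setT f.

Definition kinvariant {d : measure_display} {E : measurableType d} {R : realType}
  (mu : {measure set E -> \bar R}) (P : R.-pker E ~> E) : Prop :=
  forall A, measurable A -> (\int[mu]_x P x A)%E = mu A.

Definition beta_comp {R : realType} (b1 b2 : R -> R) (s : R) : R :=
  inf [set y : R | exists s1 s2 : R,
          [/\ 0 < s1, 0 < s2, s1 * s2 = s & y = s1 * b2 s2 + b1 s1]].

Definition Kfun {R : realType} (b : R -> R) (u : R) : R :=
  if 0 < u then u * b u^-1 else 0.

(* convex conjugate K^*(v) = sup_{u >= 0} (u v - K(u)), extended to
   v in \bar R (so that K2^* o K1^* makes sense when K1^* takes +oo) *)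
Definition conj {R : realType} (K : R -> R) (v : \bar R) : \bar R :=
  ereal_sup [set (u%:E * v - (K u)%:E)%E | u in [set u : R | 0 <= u]].

(* Chaining the two inequalities through a factorisation s = s1 s2 gives
   ||f||^2 <= s E(T2,f) + (s1 b2(s2) + b1(s1)) max(Phi1 f, Phi2 f), and taking the
   infimum over all factorisations gives the first claim.  The properties of beta
   come from choosing the factorisation suitably, and the substitution s_i = 1/u_i
   turns beta into the infimum formula for K.  Since
   u2 (u1 v - K1 u1) - K2 u2 = u1 u2 v - (K2 u2 + u2 K1 u1), the iterated supremum
   defining K2^* (K1^* v) is the supremum of u v - K u over u = u1 u2, i.e. K^* v. *)

From HB Require Import structures.
From mathcomp Require Import all_boot all_order all_algebra.
From mathcomp Require Import all_classical all_reals all_analysis.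
From mathcomp Require Import ring lra.
Import Order.TTheory GRing.Theory Num.Theory.
Import numFieldNormedType.Exports.
Local Open Scope classical_set_scope.
Local Open Scope ring_scope.

Set Implicit Arguments.
Unset Strict Implicit.
Unset Printing Implicit Defensive.

Section beta_comp.
Variable R : realType.
Variables b1 b2 : R -> R.
Hypothesis b1_gt0 : forall s : R, 0 < s -> 0 < b1 s.
Hypothesis b2_gt0 : forall s : R, 0 < s -> 0 < b2 s.
Hypothesis b1_dec : forall s t : R, 0 < s -> s <= t -> b1 t <= b1 s.
Hypothesis b2_dec : forall s t : R, 0 < s -> s <= t -> b2 t <= b2 s.

Lemma beta_comp_le (s1 s2 : R) : 0 < s1 -> 0 < s2 ->
  beta_comp b1 b2 (s1 * s2) <= s1 * b2 s2 + b1 s1.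
Proof.
move=> s1_gt0 s2_gt0; apply: ge_inf; last by exists s1, s2.
exists 0 => _ [t1 [t2 [t1_gt0 t2_gt0 _ ->]]].
by rewrite addr_ge0 ?mulr_ge0 ?ltW ?b1_gt0 ?b2_gt0.
Qed.

Lemma beta_comp_ge (s l : R) : 0 < s ->
  (forall s1 s2, 0 < s1 -> 0 < s2 -> s1 * s2 = s -> l <= s1 * b2 s2 + b1 s1) ->
  l <= beta_comp b1 b2 s.
Proof.
move=> s_gt0 l_lb; apply: lb_le_inf; first by exists (1 * b2 s + b1 1), 1, s; rewrite mul1r.
by move=> _ [s1 [s2 [s1_gt0 s2_gt0 s12 ->]]]; exact: l_lb.
Qed.

Lemma beta_comp_gt0 (s : R) : 0 < s -> 0 < beta_comp b1 b2 s.
Proof.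
move=> s_gt0; apply: (@lt_le_trans _ _ (Num.min (b2 s) (b1 1))).
  by rewrite lt_min b2_gt0 ?b1_gt0.
apply: beta_comp_ge => // s1 s2 s1_gt0 s2_gt0 s12.
have := b1_gt0 s1_gt0; have := b2_gt0 s2_gt0.
rewrite ge_min; have [s1_le1|s1_gt1] := lerP s1 1 => b2s2_gt0 b1s1_gt0; apply/orP.
- by right; have := b1_dec s1_gt0 s1_le1; nra.
- have s2_le : s2 <= s by rewrite -s12; nra.
  by left; have := b2_dec s2_gt0 s2_le; nra.
Qed.

Lemma beta_comp_nonincreasing (s t : R) : 0 < s -> s <= t ->
  beta_comp b1 b2 t <= beta_comp b1 b2 s.
Proof.
move=> s_gt0 st; have t_gt0 := lt_le_trans s_gt0 st.
apply: beta_comp_ge => // s1 s2 s1_gt0 s2_gt0 s12.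
have ts_ge1 : 1 <= t / s by rewrite ler_pdivlMr // mul1r.
have -> : t = s1 * (s2 * (t / s)) by rewrite mulrA s12 mulrCA divff ?mulr1 ?gt_eqF.
have s2ts_gt0 : 0 < s2 * (t / s) by rewrite mulr_gt0 ?divr_gt0.
apply: le_trans (beta_comp_le s1_gt0 s2ts_gt0) _.
by rewrite lerD2r ler_pM2l // b2_dec //; nra.
Qed.

Lemma beta_comp_cvg0 : b1 s @[s --> +oo] --> 0 -> b2 s @[s --> +oo] --> 0 ->
  beta_comp b1 b2 s @[s --> +oo] --> 0.
Proof.
move=> b1_cvg b2_cvg; apply/cvgr0Pnorm_lt => e e_gt0.
(* Fix [s1] with [b1 s1 < e / 2]; then [s1 * b2 (s / s1) < e / 2] for large [s]. *)
have e2_gt0 : 0 < e / 2 by rewrite divr_gt0.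
have : \forall s \near +oo, 0 < s /\ `|b1 s| < e / 2.
  by near=> s; split; near: s; [exact: nbhs_pinfty_gt | exact: cvgr0_norm_lt].
case/filter_ex => s1 [s1_gt0 b1s1].
have b2_cvg' : b2 (s / s1) @[s --> +oo] --> 0.
  by apply: cvg_comp b2_cvg; apply: gt0_cvgMly; rewrite ?invr_gt0.
have es1_gt0 : 0 < e / 2 / s1 by rewrite divr_gt0.
near=> s.
have s_gt0 : 0 < s by near: s; exact: nbhs_pinfty_gt.
have b2_small : `|b2 (s / s1)| < e / 2 / s1 by near: s; exact: cvgr0_norm_lt.
have ss1_gt0 : 0 < s / s1 by rewrite divr_gt0.
rewrite ltr_pdivlMr // mulrC gtr0_norm ?b2_gt0 // in b2_small.
rewrite gtr0_norm ?b1_gt0 // in b1s1.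
rewrite gtr0_norm ?beta_comp_gt0 //.
have := beta_comp_le s1_gt0 ss1_gt0; rewrite mulrC divfK ?gt_eqF //.
lra.
Unshelve. all: by end_near.
Qed.

Lemma weak_poincare_comp_real (N D1 D2 s a b : R) : 0 < s -> 0 <= a -> 0 <= b ->
  (forall s1, 0 < s1 -> N <= s1 * D1 + b1 s1 * a) ->
  (forall s2, 0 < s2 -> D1 <= s2 * D2 + b2 s2 * b) ->
  N <= s * D2 + beta_comp b1 b2 s * Num.max a b.
Proof.
move=> s_gt0 a_ge0 b_ge0 h1 h2; set m := Num.max a b.
have a_le : a <= m by rewrite le_max lexx.
have b_le : b <= m by rewrite le_max lexx orbT.
have chain s1 s2 : 0 < s1 -> 0 < s2 -> s1 * s2 = s ->
    N - s * D2 <= (s1 * b2 s2 + b1 s1) * m.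
  move=> s1_gt0 s2_gt0 <-.
  have := h1 _ s1_gt0.
  have : s1 * D1 <= s1 * (s2 * D2 + b2 s2 * b) by rewrite ler_pM2l // h2.
  have : b1 s1 * a <= b1 s1 * m by rewrite ler_pM2l ?b1_gt0.
  have : s1 * (b2 s2 * b) <= s1 * (b2 s2 * m) by rewrite !ler_pM2l ?b2_gt0.
  lra.
have [m_gt0|m_le0] := ltrP 0 m; last first.
  have m0 : m = 0 by apply/le_anti; rewrite m_le0 (le_trans a_ge0 a_le).
  by have := chain 1 s ltr01 s_gt0 (mul1r s); rewrite m0 mulr0 mulr0 addr0 subr_le0.
rewrite -lerBlDl -ler_pdivrMr //; apply: beta_comp_ge => // s1 s2 s1_gt0 s2_gt0 s12.
by rewrite ler_pdivrMr // chain.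
Qed.

Lemma weak_poincare_comp (N D1 D2 s : R) (a b : \bar R) :
  0 < s -> (0 <= a)%E -> (0 <= b)%E ->
  (forall s1, 0 < s1 -> (N%:E <= (s1 * D1)%:E + (b1 s1)%:E * a)%E) ->
  (forall s2, 0 < s2 -> (D1%:E <= (s2 * D2)%:E + (b2 s2)%:E * b)%E) ->
  (N%:E <= (s * D2)%:E + (beta_comp b1 b2 s)%:E * maxe a b)%E.
Proof.
move=> s_gt0 a_ge0 b_ge0 h1 h2.
have beta_gt0 : (0 < (beta_comp b1 b2 s)%:E)%E by rewrite lte_fin beta_comp_gt0.
have [->|a_fin] := eqVneq a +oo%E; first by rewrite maxye gt0_muley // addey // leey.
have [->|b_fin] := eqVneq b +oo%E; first by rewrite maxey gt0_muley // addey // leey.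
move: a b a_ge0 b_ge0 h1 h2 a_fin b_fin => [a| |] [b| |] //.
rewrite !lee_fin -EFin_max -!EFinM -EFinD lee_fin => a_ge0 b_ge0 h1 h2 _ _.
apply: (weak_poincare_comp_real (D1 := D1)) s_gt0 a_ge0 b_ge0 _ _ => [s1|s2] si_gt0.
- by have := h1 _ si_gt0; rewrite -EFinM -EFinD lee_fin.
- by have := h2 _ si_gt0; rewrite -EFinM -EFinD lee_fin.
Qed.
End beta_comp.

Section Kfun.
Variable R : realType.

Lemma KfunE (b : R -> R) (u : R) : 0 < u -> Kfun b u = u * b u^-1.
Proof. by move=> u_gt0; rewrite /Kfun u_gt0. Qed.

Lemma Kfun0 (b : R -> R) : Kfun b 0 = 0.
Proof. by rewrite /Kfun ltxx. Qed.

Lemma Kfun_gt0 (b : R -> R) (u : R) :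
  (forall s : R, 0 < s -> 0 < b s) -> 0 < u -> 0 < Kfun b u.
Proof. by move=> b_gt0 u_gt0; rewrite KfunE // mulr_gt0 ?b_gt0 ?invr_gt0. Qed.
End Kfun.

Section conj.
Variable R : realType.
Local Open Scope ereal_scope.

Lemma conj_ub (K : R -> R) (x : \bar R) (u : R) :
  (0 <= u)%R -> u%:E * x - (K u)%:E <= conj K x.
Proof. by move=> u_ge0; apply: ereal_sup_ubound; exists u. Qed.

Lemma conj_ge0 (K : R -> R) (x : \bar R) : K 0%R = 0%R -> 0 <= conj K x.
Proof. by move=> K0; have := conj_ub K x (lexx (0%R : R)); rewrite mul0e K0 sube0. Qed.

Lemma conj_le (K : R -> R) (x y : \bar R) : K 0%R = 0%R -> 0 <= y ->
  (forall u, (0 < u)%R -> u%:E * x - (K u)%:E <= y) -> conj K x <= y.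
Proof.
move=> K0 y_ge0 y_ub; apply: ub_ereal_sup => _ [u /= u_ge0 <-].
by have [->|u_neq0] := eqVneq u 0%R; [rewrite mul0e K0 sube0 | rewrite y_ub // lt_def u_neq0].
Qed.
End conj.

Section Kfun_beta_comp.
Variable R : realType.
Variables b1 b2 : R -> R.
Hypothesis b1_gt0 : forall s : R, 0 < s -> 0 < b1 s.
Hypothesis b2_gt0 : forall s : R, 0 < s -> 0 < b2 s.

Lemma Kfun_beta_comp_le (u1 u2 : R) : 0 < u1 -> 0 < u2 ->
  Kfun (beta_comp b1 b2) (u1 * u2) <= Kfun b2 u2 + u2 * Kfun b1 u1.
Proof.
move=> u1_gt0 u2_gt0; rewrite !KfunE ?mulr_gt0 // invfM.
have -> : u2 * b2 u2^-1 + u2 * (u1 * b1 u1^-1) =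
    u1 * u2 * (u1^-1 * b2 u2^-1 + b1 u1^-1) by field; rewrite gt_eqF.
by rewrite ler_pM2l ?mulr_gt0 // beta_comp_le ?invr_gt0.
Qed.

Lemma Kfun_beta_comp_ge (u l : R) : 0 < u ->
  (forall u1 u2, 0 < u1 -> 0 < u2 -> u1 * u2 = u -> l <= Kfun b2 u2 + u2 * Kfun b1 u1) ->
  l <= Kfun (beta_comp b1 b2) u.
Proof.
move=> u_gt0 l_lb; rewrite KfunE // -ler_pdivrMl //.
apply: beta_comp_ge; rewrite ?invr_gt0 // => s1 s2 s1_gt0 s2_gt0 s12.
have u_eq : s1^-1 * s2^-1 = u by rewrite -invfM s12 invrK.
have s1V_gt0 : 0 < s1^-1 by rewrite invr_gt0.
have s2V_gt0 : 0 < s2^-1 by rewrite invr_gt0.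
have := l_lb _ _ s1V_gt0 s2V_gt0 u_eq; rewrite !KfunE // !invrK.
rewrite ler_pdivrMl // -u_eq.
suff -> : s2^-1 * b2 s2 + s2^-1 * (s1^-1 * b1 s1) =
    s1^-1 * s2^-1 * (s1 * b2 s2 + b1 s1) by [].
by field; rewrite !gt_eqF.
Qed.

Lemma Kfun_beta_comp (u : R) : 0 < u ->
  Kfun (beta_comp b1 b2) u = inf [set y : R | exists u1 u2 : R,
    [/\ 0 < u1, 0 < u2, u1 * u2 = u & y = Kfun b2 u2 + u2 * Kfun b1 u1]].
Proof.
move=> u_gt0; set T := [set y | _].
have K_lb : lbound T (Kfun (beta_comp b1 b2) u).
  by move=> _ [u1 [u2 [u1_gt0 u2_gt0 <- ->]]]; exact: Kfun_beta_comp_le.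
apply/le_anti/andP; split.
  by apply: lb_le_inf K_lb; exists (Kfun b2 u + u * Kfun b1 1), 1, u; rewrite mul1r.
apply: Kfun_beta_comp_ge => // u1 u2 u1_gt0 u2_gt0 u12.
by apply: ge_inf; [exists (Kfun (beta_comp b1 b2) u) | exists u1, u2].
Qed.

Local Open Scope ereal_scope.

Lemma conj_Kfun_beta_comp_le (v : R) :
  conj (Kfun (beta_comp b1 b2)) v%:E <= conj (Kfun b2) (conj (Kfun b1) v%:E).
Proof.
apply: conj_le; [exact: Kfun0 | exact/conj_ge0/Kfun0 | move=> u u_gt0].
move: (conj_ge0 (conj (Kfun b1) v%:E) (Kfun0 b2)).
move: (conj_ub (Kfun b1) v%:E) (conj_ub (Kfun b2) (conj (Kfun b1) v%:E)).
case: (conj (Kfun b2) _) => [r| |] C1_ub C2_ub // _; last by rewrite leey.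
rewrite -EFinM -EFinB lee_fin lerBlDr -lerBlDl.
apply: Kfun_beta_comp_ge => // u1 u2 u1_gt0 u2_gt0 <-.
move: (C1_ub u1 (ltW u1_gt0)) (C2_ub u2 (ltW u2_gt0)).
case: (conj (Kfun b1) v%:E) => [c| |] //; last by rewrite gt0_muley ?lte_fin // addye.
rewrite -!EFinM -!EFinB !lee_fin => C1_ge C2_le.
have : (u2 * (u1 * v - Kfun b1 u1) <= u2 * c)%R by rewrite ler_pM2l.
lra.
Qed.

Lemma conj_Kfun_beta_comp_ge (v : R) :
  conj (Kfun b2) (conj (Kfun b1) v%:E) <= conj (Kfun (beta_comp b1 b2)) v%:E.
Proof.
apply: conj_le; [exact: Kfun0 | exact/conj_ge0/Kfun0 | move=> u2 u2_gt0].
move: (conj_ub (Kfun (beta_comp b1 b2)) v%:E) (conj_ge0 v%:E (Kfun0 (beta_comp b1 b2))).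
case: (conj (Kfun (beta_comp b1 b2)) v%:E) => [L| |] L_ub // L_ge0; last by rewrite leey.
rewrite lee_fin in L_ge0.
have K2_gt0 := Kfun_gt0 b2_gt0 u2_gt0.
have : conj (Kfun b1) v%:E <= ((L + Kfun b2 u2) / u2)%:E.
  apply: conj_le => [||u1 u1_gt0]; first exact: Kfun0.
    by rewrite lee_fin divr_ge0 ?addr_ge0 // ltW.
  have := L_ub (u1 * u2)%R (ltW (mulr_gt0 u1_gt0 u2_gt0)).
  have := Kfun_beta_comp_le u1_gt0 u2_gt0.
  rewrite -!EFinM -!EFinB !lee_fin ler_pdivlMr //.
  lra.
move: (conj_ge0 v%:E (Kfun0 b1)).
case: (conj (Kfun b1) v%:E) => [c| |] // _.
rewrite -EFinM -EFinB !lee_fin ler_pdivlMr //.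
lra.
Qed.

Lemma conj_Kfun_beta_comp (v : R) :
  conj (Kfun (beta_comp b1 b2)) v%:E = conj (Kfun b2) (conj (Kfun b1) v%:E).
Proof. by apply/le_anti; rewrite conj_Kfun_beta_comp_le conj_Kfun_beta_comp_ge. Qed.
End Kfun_beta_comp.

Theorem proposition32 (R : realType) (d : measure_display) (E : measurableType d)
  (mu : probability E R) (P1 P2 : R.-pker E ~> E)
  (Q1 Q2 T1 T2 : (E -> R) -> (E -> R))
  (b1 b2 : R -> R) (Phi1 Phi2 : (E -> R) -> \bar R) :
  (* P1, P2 are mu-invariant Markov kernels *)
  kinvariant mu P1 -> kinvariant mu P2 ->
  (* Q_i is the L^2(mu)-adjoint P_i^* of P_i *)
  (forall f, L2 mu f -> L2 mu (Q1 f)) ->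
  (forall f g, L2 mu f -> L2 mu g -> ip mu (kop P1 f) g = ip mu f (Q1 g)) ->
  (forall f, L2 mu f -> L2 mu (Q2 f)) ->
  (forall f g, L2 mu f -> L2 mu g -> ip mu (kop P2 f) g = ip mu f (Q2 g)) ->
  (* T_i is either P_i or P_i^* P_i *)
  (T1 = kop P1 \/ T1 = Q1 \o kop P1) ->
  (T2 = kop P2 \/ T2 = Q2 \o kop P2) ->
  (* beta_i : (0,oo) -> (0,oo) decreasing, beta_i(s) -> 0 as s -> oo *)
  (forall s, 0 < s -> 0 < b1 s) ->
  (forall s t, 0 < s -> s <= t -> b1 t <= b1 s) ->
  (b1 s @[s --> +oo] --> 0) ->
  (forall s, 0 < s -> 0 < b2 s) ->
  (forall s t, 0 < s -> s <= t -> b2 t <= b2 s) ->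
  (b2 s @[s --> +oo] --> 0) ->
  (* Phi_i : L^2(mu) -> [0, oo] *)
  (forall f, L2 mu f -> (0 <= Phi1 f)%E) ->
  (forall f, L2 mu f -> (0 <= Phi2 f)%E) ->
  (forall f c, L2 mu f -> 0 < c -> Phi1 (fun x => (c * f x)%R) = ((c ^+ 2)%R%:E * Phi1 f)%E) ->
  (forall f c, L2 mu f -> 0 < c -> Phi2 (fun x => (c * f x)%R) = ((c ^+ 2)%R%:E * Phi2 f)%E) ->
  (forall f n, L2 mu f -> (Phi1 (iter n (kop P1) f) <= Phi1 f)%E) ->
  (forall f n, L2 mu f -> (Phi2 (iter n (kop P2) f) <= Phi2 f)%E) ->
  (forall f, L2 mu f ->
     ((norm2sq mu (fun x => (f x - mean mu f)%R))%:E
        <= aconst mu Phi1 * Phi1 (fun x => (f x - mean mu f)%R))%E) ->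
  (forall f, L2 mu f ->
     ((norm2sq mu (fun x => (f x - mean mu f)%R))%:E
        <= aconst mu Phi2 * Phi2 (fun x => (f x - mean mu f)%R))%E) ->
  (forall f n, L20 mu f -> (Phi1 (iter n (kop P2) f) <= Phi1 f)%E) ->
  (* the two weak Poincare-type inequalities *)
  (forall s f, 0 < s -> L20 mu f ->
     ((norm2sq mu f)%:E <= (s * dirichlet mu T1 f)%R%:E + (b1 s)%:E * Phi1 f)%E) ->
  (forall s f, 0 < s -> L20 mu f ->
     ((dirichlet mu T1 f)%:E <= (s * dirichlet mu T2 f)%R%:E + (b2 s)%:E * Phi2 f)%E) ->
  let Phi := fun f => Order.max (Phi1 f) (Phi2 f) in
  let beta := beta_comp b1 b2 in
  (forall s f, 0 < s -> L20 mu f ->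
         ((norm2sq mu f)%:E <= (s * dirichlet mu T2 f)%R%:E + (beta s)%:E * Phi f)%E) /\
      (forall s, 0 < s -> 0 < beta s) /\
      (forall s t, 0 < s -> s <= t -> beta t <= beta s) /\
      (beta s @[s --> +oo] --> 0) /\
      (forall f c, L2 mu f -> 0 < c -> Phi (fun x => (c * f x)%R) = ((c ^+ 2)%R%:E * Phi f)%E) /\
      (forall f n, L20 mu f -> (Phi (iter n (kop P2) f) <= Phi f)%E) /\
      (forall u, 0 < u ->
         Kfun beta u = inf [set y : R | exists u1 u2 : R,
           [/\ 0 < u1, 0 < u2, u1 * u2 = u & y = Kfun b2 u2 + u2 * Kfun b1 u1]]) /\
    (forall v : R, conj (Kfun beta) v%:E = conj (Kfun b2) (conj (Kfun b1) v%:E)).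
Proof.
move=> _ _ _ _ _ _ _ _ b1_gt0 b1_dec b1_cvg b2_gt0 b2_dec b2_cvg Phi1_ge0 Phi2_ge0
  Phi1Z Phi2Z _ Phi2_iter _ _ Phi1_iter2 wpi1 wpi2 Phi beta.
split.
  move=> s f s_gt0 f0.
  apply: (weak_poincare_comp b1_gt0 b2_gt0 b1_dec b2_dec (D1 := dirichlet mu T1 f)) => //.
  - exact: Phi1_ge0 f0.1.
  - exact: Phi2_ge0 f0.1.
  - by move=> s1 s1_gt0; exact: wpi1.
  - by move=> s2 s2_gt0; exact: wpi2.
split; first by move=> s; exact: beta_comp_gt0.
split; first by move=> s t; exact: beta_comp_nonincreasing.
split; first exact: beta_comp_cvg0.
split.
  move=> f c f_L2 c_gt0.
  by rewrite /Phi Phi1Z // Phi2Z // maxe_pMr // lee_fin sqr_ge0.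
split.
  move=> f n f0; rewrite /Phi ge_max le_max (Phi1_iter2 _ _ f0) le_max.
  by rewrite (Phi2_iter _ _ f0.1) orbT.
split; first by move=> u; exact: Kfun_beta_comp.
by move=> v; exact: conj_Kfun_beta_comp.
Qed.
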